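(* Assume $F\in\mathbb C^{n\times n}$ is Hermitian. Define Hermitian matrices $T_k\in\mathbb C^{k\times k}$ recursively by $$T_1=\frac{1+V_1^*FV_1}{2a_1},$$ and, for $k\ge2$, $$T_k=P_k^{-*}\left(\begin{bmatrix}T_{k-1}&0\\0&2a_k\end{bmatrix}+\frac1{2a_k}Q_k^{-*}V_k^*FV_kQ_k^{-1}\right)P_k^{-1},$$ where $$Q_k=\frac{1}{-2a_k}\begin{bmatrix}D_k&0\\ \mathbf 1_{k-1}^T&1\end{bmatrix},\qquad D_k=\operatorname{diag}(\alpha_k-\alpha_1,\dots,\alpha_k-\alpha_{k-1}),$$ and $P_k^{-1}$ is the $k\times k$ matrix $$P_k^{-1}=\begin{bmatrix}\operatorname{diag}\!\Big(\frac{\alpha_1-\alpha_k}{\alpha_1+\bar\alpha_k},\dots,\frac{\alpha_{k-1}-\alpha_k}{\alpha_{k-1}+\bar\alpha_k}\Big)&0\\ \Big(\frac{-1}{\alpha_1+\bar\alpha_k},\dots,\frac{-1}{\alpha_{k-1}+\bar\alpha_k}\Big)&\frac{-1}{2a_k}\end{bmatrix}$$ (with $P_k^{-*}$ its conjugate transpose). Then for every $k\ge1$, $$\Lambda_k^*T_k+T_k\Lambda_k-V_k^*FV_k-\mathbf 1\mathbf 1^*=0,$$ equivalently $T_k(i,j)=\dfrac{1+(V_k^*FV_k)_{ij}}{\bar\alpha_i+\alpha_j}$ for all $1\le i,j\le k$. In particular, the leading $(k-1)\times(k-1)$ principal submatrix of $T_k$ equals $T_{k-1}$.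
   Context: Let $A\in\mathbb C^{n\times n}$ and $C\in\mathbb C^{1\times n}$; $M^*$ denotes the conjugate transpose. Let $\alpha_1,\alpha_2,\dots\in\mathbb C$ be pairwise distinct with $a_j:=\operatorname{Re}(\alpha_j)>0$, and such that $-A^*+\alpha_jI$ is nonsingular for all $j$. Set $$V_k=\big[(-A^*+\alpha_1I)^{-1}C^*,\dots,(-A^*+\alpha_kI)^{-1}C^*\big]\in\mathbb C^{n\times k},$$ $\Lambda_k=\operatorname{diag}(\alpha_1,\dots,\alpha_k)$, and $\mathbf 1=[1,\dots,1]^T\in\mathbb R^k$. *)

(* Complex numbers: an arbitrary numClosedFieldType C
   (algebraically closed field with conjugation and order on reals), which
   covers the complex numbers; everything in the statement is algebraic. *)
From HB Require Import structures.
From mathcomp Require Import all_boot all_order all_algebra.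
Set Implicit Arguments. Unset Strict Implicit. Unset Printing Implicit Defensive.
Import Order.TTheory GRing.Theory Num.Theory Num.Def.
Local Open Scope ring_scope.

Section Defs.
Variable C : numClosedFieldType.

Definition adjmx (m p : nat) (M : 'M[C]_(m, p)) : 'M[C]_(p, m) :=
  (map_mx Num.conj M)^T.

Variables (n : nat) (A : 'M[C]_n) (Cv : 'M[C]_(1, n)) (F : 'M[C]_n).
(* alpha is 0-indexed: alpha 0 = alpha_1, ..., alpha (k-1) = alpha_k *)
Variable alpha : nat -> C.

Definition re_a (j : nat) : C := 'Re (alpha j).

Definition Vmat (k : nat) : 'M[C]_(n, k) :=
  \matrix_(i < n, j < k) (invmx (- adjmx A + (alpha j)%:M) *m adjmx Cv) i ord0.

Definition Lam (k : nat) : 'M[C]_k := diag_mx (\row_(j < k) alpha j).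

(* For the step producing T of size k.+2 (paper's index k+2, new alpha = alpha k.+1):
   D = diag(alpha_new - alpha_1, ..., alpha_new - alpha_{k+1}) *)
Definition Dmat (k : nat) : 'M[C]_k.+1 :=
  diag_mx (\row_(j < k.+1) (alpha k.+1 - alpha j)).

Definition Qmat (k : nat) : 'M[C]_k.+2 :=
  castmx (addn1 _, addn1 _)
    ((- (2 * re_a k.+1))^-1 *: block_mx (Dmat k) 0 (const_mx 1) (1%:M : 'M[C]_1)).

Definition Pinv (k : nat) : 'M[C]_k.+2 :=
  castmx (addn1 _, addn1 _)
    (block_mx
       (diag_mx (\row_(j < k.+1)
          ((alpha j - alpha k.+1) / (alpha j + Num.conj (alpha k.+1)))))
       0
       (\row_(j < k.+1) (- 1 / (alpha j + Num.conj (alpha k.+1))))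
       ((- 1 / (2 * re_a k.+1))%:M : 'M[C]_1)).

(* Tmat k is the paper's T_{k+1} (size k+1) *)
Fixpoint Tmat (k : nat) : 'M[C]_k.+1 :=
  match k with
  | 0 => ((1 + (adjmx (Vmat 1) *m F *m Vmat 1) ord0 ord0) / (2 * re_a 0))%:M
  | k'.+1 =>
      adjmx (Pinv k') *m
        (castmx (addn1 _, addn1 _)
            (block_mx (Tmat k') 0 0 ((2 * re_a k'.+1)%:M : 'M[C]_1))
         + (2 * re_a k'.+1)^-1 *:
             (adjmx (invmx (Qmat k')) *m (adjmx (Vmat k'.+2) *m F *m Vmat k'.+2)
                *m invmx (Qmat k')))
        *m Pinv k'
  end.

End Defs.

From HB Require Import structures.
From mathcomp Require Import all_boot all_order all_algebra ring.
Set Implicit Arguments. Unset Strict Implicit. Unset Printing Implicit Defensive.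
Import Order.TTheory GRing.Theory Num.Theory Num.Def.
Local Open Scope ring_scope.

(* Write G_k = V_k^* F V_k.  The Lyapunov equation
     Lambda_k^* T + T Lambda_k = G_k + 1 1^*
   has the explicit entrywise solution
     lyap_sol G_k (i, j) = (1 + G_k(i, j)) / (conj alpha_i + alpha_j),
   whose denominators never vanish because Re alpha_j > 0.  We show by
   induction on k that the recursion defining T_k produces exactly this
   matrix: the heart of the argument (lemma [lyap_sol_step]) is that, for
   ANY square matrix G, the recursion step applied to lyap_sol of the leading
   principal submatrix of G yields lyap_sol G.  All the matrices involved in
   that step (P_k^{-1}, Q_k and the explicit inverse of Q_k) are "arrowhead"
   matrices, nonzero only on the diagonal and the last row, so each entry of
   the product is an explicit short sum and the identity reduces to
   four rational-function identities, one for each position of (i, j) with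
   respect to the last row/column.  Both parts of the theorem then follow:
   lyap_sol G solves the Lyapunov equation, and taking leading principal
   submatrices commutes with lyap_sol and with G_k. *)

(* The bordered matrix [X 0; r c] of size k+2, written with the casts used in
   the definitions of P_k^{-1}, Q_k and T_k. *)
Lemma bordered_mxE (R : pzRingType) k (X : 'M[R]_k.+1) (r : 'rV[R]_k.+1) (c : R)
    (x : 'I_k.+2 -> 'I_k.+2 -> R) (g : 'I_k.+2 -> R)
    (Xx : forall i j, X i j = x (widen_ord (leqnSn _) i) (widen_ord (leqnSn _) j))
    (rg : forall j, r 0 j = g (widen_ord (leqnSn _) j)) (cg : c = g ord_max) (i j : 'I_k.+2) :
  (castmx (addn1 _, addn1 _) (block_mx X 0 r c%:M) : 'M_k.+2) i j =
  if i == ord_max then g j else if j == ord_max then 0 else x i j.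
Proof.
have widenE (l : 'I_k.+2) (l' : 'I_k.+1) : l = l' :> nat -> widen_ord (leqnSn _) l' = l.
  by move=> e; apply/val_inj.
rewrite castmxE /block_mx !mxE.
case: splitP => i' /= Hi; rewrite !mxE; case: splitP => j' /= Hj; rewrite ?mxE;
  rewrite -[j == ord_max]val_eqE -[i == ord_max]val_eqE /= ?Hi ?Hj.
- by rewrite !ltn_eqF // Xx (widenE i) // (widenE j).
- by rewrite (ord1 j') addn0 eqxx ltn_eqF.
- by rewrite (ord1 i') addn0 eqxx rg (widenE j).
- rewrite (ord1 i') (ord1 j') addn0 !eqxx mulr1n cg.
  by congr g; apply/val_inj; rewrite /= Hj (ord1 j') addn0.
Qed.

Lemma widen_ord_max_neq m (j : 'I_m.+1) : (widen_ord (leqnSn _) j == ord_max) = false.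
Proof. by rewrite -val_eqE /= ltn_eqF. Qed.

Lemma widen_ord_eq m (i j : 'I_m) :
  (widen_ord (leqnSn _) i == widen_ord (leqnSn _) j) = (i == j).
Proof. by []. Qed.

Ltac case_last i j :=
  let i_max := fresh "i_max" in let j_max := fresh "j_max" in
  case: (eqVneq i ord_max) => [i_max|i_max]; case: (eqVneq j ord_max) => [j_max|j_max];
  rewrite ?i_max ?j_max ?eqxx ?(negbTE i_max) ?(negbTE j_max) ?[ord_max == _]eq_sym
    ?(negbTE i_max) ?(negbTE j_max) /=.

(* Arrowhead matrices: the only nonzero off-diagonal entries lie in the last
   row.  Multiplying by such a matrix touches at most two entries. *)
Definition arrowhead (R : pzSemiRingType) k (M : 'M[R]_k.+2) :=
  forall i j : 'I_k.+2, i != j -> i != ord_max -> M i j = 0.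

Lemma mulmx_arrowhead (R : pzSemiRingType) k (X M : 'M[R]_k.+2) :
  arrowhead M -> forall i j, (X *m M) i j =
    X i j * M j j + (if j == ord_max then 0 else X i ord_max * M ord_max j).
Proof.
move=> Marrow i j; rewrite mxE (bigD1 j) //=; case: eqP => [->|/eqP j_max].
  by rewrite big1 ?addr0 // => l /eqP l_max; rewrite Marrow ?mulr0 //; apply/eqP.
rewrite (bigD1 ord_max) 1?eq_sym //= big1 ?addr0 // => l /andP [lj l_max].
by rewrite Marrow ?mulr0.
Qed.

Lemma adjmx_arrowhead_mulmx (C : numClosedFieldType) k (X M : 'M[C]_k.+2) :
  arrowhead M -> forall i j, (adjmx M *m X) i j =
    (M i i)^* * X i j + (if i == ord_max then 0 else (M ord_max i)^* * X ord_max j).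
Proof.
move=> Marrow i j; rewrite mxE (bigD1 i) //= !mxE; case: eqP => [->|/eqP i_max].
  by rewrite big1 ?addr0 // => l /eqP l_max; rewrite !mxE Marrow ?conjC0 ?mul0r //; apply/eqP.
rewrite (bigD1 ord_max) 1?eq_sym //= big1 ?addr0 ?mxE // => l /andP [li l_max].
by rewrite !mxE Marrow ?conjC0 ?mul0r // eq_sym.
Qed.

(* Conjugation as a field morphism, stated on conj itself so that the
   rewritten terms stay syntactically comparable (e.g. for conjCK). *)
Section ConjMorphism.
Variables (C : numClosedFieldType) (x y : C).
Lemma conjCD : (x + y)^* = x^* + y^*. Proof. exact: rmorphD. Qed.
Lemma conjCB : (x - y)^* = x^* - y^*. Proof. exact: rmorphB. Qed.
Lemma conjCM : (x * y)^* = x^* * y^*. Proof. exact: rmorphM. Qed.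
Lemma conjCN : (- x)^* = - x^*. Proof. exact: rmorphN. Qed.
Lemma conjCV : (x^-1)^* = (x^*)^-1. Proof. exact: fmorphV. Qed.
End ConjMorphism.

Lemma adjmx_diag_mulmx (C : numClosedFieldType) m (d : 'rV[C]_m) (S : 'M_m) :
  adjmx (diag_mx d) *m S = \matrix_(i, j) ((d 0 i)^* * S i j).
Proof.
rewrite /adjmx map_diag_mx tr_diag_mx mul_diag_mx.
by apply/matrixP => i j; rewrite !mxE.
Qed.

Definition leading_submx (R : Type) m (G : 'M[R]_m.+1) : 'M[R]_m :=
  \matrix_(i, j) G (widen_ord (leqnSn m) i) (widen_ord (leqnSn m) j).

Section Lyapunov.
Variables (C : numClosedFieldType) (alpha : nat -> C).
Hypothesis alpha_inj : injective alpha.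
Hypothesis alpha_re : forall j, 0 < 'Re (alpha j).

Lemma two_re_a j : 2 * re_a alpha j = (alpha j)^* + alpha j.
Proof. by rewrite /re_a ReE mulrC -mulrA mulVf ?mulr1 ?pnatr_eq0 // addrC. Qed.

(* The denominators conj alpha_i + alpha_j have positive real part. *)
Lemma conj_add_neq0 i j : (alpha i)^* + alpha j != 0.
Proof.
apply/eqP => /(congr1 (@Re C)); rewrite raddfD /= Re_conj raddf0 => Re0.
by have := addr_gt0 (alpha_re i) (alpha_re j); rewrite Re0 ltxx.
Qed.

Lemma add_conj_neq0 i j : alpha i + (alpha j)^* != 0.
Proof. by rewrite addrC conj_add_neq0. Qed.

(* The alpha's are pairwise distinct, so D_k is invertible. *)
Lemma sub_alpha_neq0 k (j : 'I_k.+2) : j != ord_max -> alpha k.+1 - alpha j != 0.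
Proof.
move=> j_max; rewrite subr_eq0 (inj_eq alpha_inj) eq_sym.
by apply: contra j_max => /eqP jk; apply/eqP/val_inj.
Qed.

Lemma sub_conj_alpha_neq0 k (j : 'I_k.+2) :
  j != ord_max -> (alpha k.+1)^* - (alpha j)^* != 0.
Proof. by move=> j_max; rewrite -conjCB conjC_eq0 sub_alpha_neq0. Qed.

Ltac nonzero := repeat (apply/andP; split); rewrite ?oppr_eq0;
  by [apply: conj_add_neq0 | apply: add_conj_neq0
     | apply: sub_alpha_neq0 | apply: sub_conj_alpha_neq0].

Lemma PinvE k i j : Pinv alpha k i j =
  if i == ord_max then
    (if j == ord_max then -1 / (2 * re_a alpha k.+1) else -1 / (alpha j + (alpha k.+1)^*))
  else if j == ord_max then 0
  else if i == j then (alpha j - alpha k.+1) / (alpha j + (alpha k.+1)^*) else 0.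
Proof.
move: i j; apply: bordered_mxE => [i' j'|j'|]; rewrite ?mxE ?widen_ord_max_neq ?eqxx //.
by rewrite widen_ord_eq; case: eqP => [->|_]; rewrite ?mulr1n ?mulr0n.
Qed.

Lemma QmatE k i j : Qmat alpha k i j = (- (2 * re_a alpha k.+1))^-1 *
  (if i == ord_max then 1 else if j == ord_max then 0
   else if i == j then alpha k.+1 - alpha j else 0).
Proof.
rewrite /Qmat castmxE mxE -castmxE; congr (_ * _); move: i j.
apply: bordered_mxE => [i' j'|j'|]; rewrite ?mxE ?widen_ord_max_neq //.
by rewrite widen_ord_eq; case: eqP => [->|_]; rewrite ?mulr1n ?mulr0n.
Qed.

Definition Qinv k : 'M[C]_k.+2 := \matrix_(i, j)
  (if i == ord_max then
     (if j == ord_max then - (2 * re_a alpha k.+1)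
      else (2 * re_a alpha k.+1) / (alpha k.+1 - alpha j))
   else if j == ord_max then 0
   else if i == j then - (2 * re_a alpha k.+1) / (alpha k.+1 - alpha j) else 0).

Lemma Pinv_arrowhead k : arrowhead (Pinv alpha k).
Proof. by move=> i j ij i_max; rewrite PinvE (negbTE i_max) (negbTE ij); case: ifP. Qed.

Lemma Qinv_arrowhead k : arrowhead (Qinv k).
Proof. by move=> i j ij i_max; rewrite mxE (negbTE i_max) (negbTE ij); case: ifP. Qed.

Lemma mulmx_Qmat_Qinv k : Qmat alpha k *m Qinv k = 1%:M.
Proof.
apply/matrixP => i j; rewrite mulmx_arrowhead; last exact: Qinv_arrowhead.
rewrite !QmatE !mxE !eqxx two_re_a.
case_last i j.
- by field; nonzero.
- by field; nonzero.
- by rewrite mulr0 mul0r addr0.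
- case: (eqVneq i j) => [_|ij]; rewrite ?mulr1n ?mulr0n; first by field; nonzero.
  by rewrite !mulr0 !mul0r addr0.
Qed.

Lemma invmx_Qmat k : invmx (Qmat alpha k) = Qinv k.
Proof.
have [Qunit _] := mulmx1_unit (mulmx_Qmat_Qinv k).
by rewrite -[invmx _]mulmx1 -(mulmx_Qmat_Qinv k) mulmxA mulVmx ?mul1mx.
Qed.

Definition lyap_sol m (G : 'M[C]_m) : 'M[C]_m :=
  \matrix_(i, j) ((1 + G i j) / ((alpha i)^* + alpha j)).

Lemma lyap_solP m (G : 'M[C]_m) :
  adjmx (Lam alpha m) *m lyap_sol G + lyap_sol G *m Lam alpha m - G - const_mx 1 = 0.
Proof.
apply/matrixP => i j.
rewrite /Lam adjmx_diag_mulmx mul_mx_diag !mxE.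
by have ? := conj_add_neq0 i j; field.
Qed.

Lemma leading_submx_lyap m (G : 'M[C]_m.+1) :
  leading_submx (lyap_sol G) = lyap_sol (leading_submx G).
Proof. by apply/matrixP => i j; rewrite !mxE. Qed.

Lemma lyap_blockE k (G : 'M[C]_k.+2) i j :
  (castmx (addn1 _, addn1 _) (block_mx (lyap_sol (leading_submx G)) 0 0
     ((2 * re_a alpha k.+1)%:M : 'M_1)) : 'M_k.+2) i j =
  if i == ord_max then (if j == ord_max then 2 * re_a alpha k.+1 else 0)
  else if j == ord_max then 0 else (1 + G i j) / ((alpha i)^* + alpha j).
Proof.
by move: i j; apply: bordered_mxE => [i' j'|j'|]; rewrite ?mxE ?widen_ord_max_neq ?eqxx.
Qed.

Lemma lyap_sol_step k (G : 'M[C]_k.+2) :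
  adjmx (Pinv alpha k) *m
    (castmx (addn1 _, addn1 _) (block_mx (lyap_sol (leading_submx G)) 0 0
        ((2 * re_a alpha k.+1)%:M : 'M_1))
     + (2 * re_a alpha k.+1)^-1 *: (adjmx (Qinv k) *m G *m Qinv k))
  *m Pinv alpha k = lyap_sol G.
Proof.
have entryDZ (X Y : 'M[C]_k.+2) c p q : (X + c *: Y) p q = X p q + c * Y p q.
  by rewrite !mxE.
apply/matrixP => i j.
rewrite (mulmx_arrowhead _ (@Pinv_arrowhead k)).
rewrite !(adjmx_arrowhead_mulmx _ (@Pinv_arrowhead k)) !entryDZ !lyap_blockE.
rewrite !(mulmx_arrowhead _ (@Qinv_arrowhead k)).
rewrite !(adjmx_arrowhead_mulmx _ (@Qinv_arrowhead k)).
rewrite !PinvE /Qinv !mxE !eqxx !two_re_a.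
case_last i j;
  rewrite ?(conjCD, conjCB, conjCM, conjCN, conjC1, conjC0, conjCV, conjCK);
  by field; nonzero.
Qed.

Variables (n : nat) (A : 'M[C]_n) (Cv : 'M[C]_(1, n)) (F : 'M[C]_n).

Definition gram m : 'M[C]_m := adjmx (Vmat A Cv alpha m) *m F *m Vmat A Cv alpha m.

Lemma leading_submx_gram m : leading_submx (gram m.+1) = gram m.
Proof.
apply/matrixP => i j; rewrite !mxE; apply: eq_bigr => l _; rewrite !mxE.
by congr (_ * _); apply: eq_bigr => p _; rewrite !mxE.
Qed.

Lemma Tmat_lyap k : Tmat A Cv F alpha k = lyap_sol (gram k.+1).
Proof.
elim: k => [|k IH].
  apply/matrixP => i j; rewrite (ord1 i) (ord1 j) /= !mxE /= two_re_a.
  by rewrite mulr1n.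
by rewrite /= IH -leading_submx_gram invmx_Qmat lyap_sol_step.
Qed.

Lemma leading_submx_Tmat k : leading_submx (Tmat A Cv F alpha k.+1) = Tmat A Cv F alpha k.
Proof. by rewrite !Tmat_lyap leading_submx_lyap leading_submx_gram. Qed.

End Lyapunov.

Theorem proposition6p1 (C : numClosedFieldType) (n : nat)
  (A : 'M[C]_n) (Cv : 'M[C]_(1, n)) (F : 'M[C]_n) (alpha : nat -> C)
  (Halpha_inj : injective alpha)
  (Halpha_re : forall j, 0 < 'Re (alpha j))
  (Hunit : forall j, (- adjmx A + (alpha j)%:M) \in unitmx)
  (Fherm : adjmx F = F) :
  forall k : nat,
    adjmx (Lam alpha k.+1) *m Tmat A Cv F alpha k
      + Tmat A Cv F alpha k *m Lam alpha k.+1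
      - adjmx (Vmat A Cv alpha k.+1) *m F *m Vmat A Cv alpha k.+1
      - const_mx 1 = 0
    /\ (\matrix_(i < k.+1, j < k.+1)
          Tmat A Cv F alpha k.+1 (widen_ord (leqnSn k.+1) i) (widen_ord (leqnSn k.+1) j))
       = Tmat A Cv F alpha k.
Proof.
move=> k; split.
- by rewrite (Tmat_lyap Halpha_inj Halpha_re) lyap_solP.
- exact: leading_submx_Tmat.
Qed.
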